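(* Let $X$ be a type and let $C$ be little-Sierpiński complete. Then $C$ is orthogonal to the map $$\textstyle\sum_{u:\mathsf L(X)}\sigma_{(\pi u=1)}\colon\ \sum_{u:\mathsf L(X)}(\pi u=1)_\bot\longrightarrow\sum_{u:\mathsf L(X)}\mathsf L(\pi u=1).$$ Here $\pi\colon\mathsf L(X)\to\mathbb I$ is the first projection. Equivalently, $C$ is orthogonal to the comparison map $\mathsf{MCyl}_{\mathsf L(X)}(\eta_X)\to\mathsf L_{\mathsf L(X)}(\eta_X)$ from the open mapping cylinder to the relative partial map classifier of the open embedding $\eta_X\colon X\hookrightarrow\mathsf L(X)$, $x\mapsto(1,\lambda\_.x)$.
   Context: Work in univalent foundations. Let $\mathbb J$ be a bounded distributive lattice with underlying set $\mathbb I$. Define: - the join $P*X$ as the pushout of $P\leftarrow P\times X\to X$; - a type $X$ to be $P$-connected if $X^P$ is contractible; - the Sierpiński cone $X_\bot:=\sum_{i:\mathbb I}(i=0)*X$; - the open partial map classifier $\mathsf L(X):=\sum_{i:\mathbb I}X^{(i=1)}$. For a $(0=1)$-connected $X$, with centre of contraction $c$ of $X^{(0=1)}$, the comparison map $\sigma_X\colon X_\bot\to\mathsf L(X)$ sends $(i,\mathrm{inr}(x))\mapsto(i,\lambda\_.x)$ and $(i,\mathrm{inl}(p))$ with $p:i=0$ to the point $(0,c)$ transported along $p$. The glue paths are given by contractibility of $X^{(0=1)}$. Every proposition $(i=1)$ is $(0=1)$-connected. A type $C$ is orthogonal to $m\colon A\to B$ if $C^B\to C^A$ is an equivalence. $C$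 is little-Sierpiński complete if it is orthogonal to $\sigma_{(i=1)}\colon(i=1)_\bot\to\mathsf L(i=1)$ for every $i:\mathbb I$. For a map $f\colon E\to B$, the open mapping cylinder is $\mathsf{MCyl}_B(f):=\sum_{b:B}(\mathrm{fib}_f(b))_\bot$, the relative partial map classifier is $\mathsf L_B(f):=\sum_{b:B}\mathsf L(\mathrm{fib}_f(b))$, and the comparison is $\sum_b\sigma_{\mathrm{fib}_f(b)}$. *)

(* Pushouts (joins) are not built in; they are
   specified by their universal property and their existence is a
   hypothesis of the theorem. *)



Inductive paths {A : Type} (a : A) : A -> Type := idpath : paths a a.
Arguments idpath {A a}.
Notation "x == y" := (paths x y) (at level 70, no associativity).

Definition inverse {A} {x y : A} (p : x == y) : y == x :=
  match p with idpath => idpath end.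
Definition concat {A} {x y z : A} (p : x == y) (q : y == z) : x == z :=
  match q with idpath => p end.
Definition ap {A B} (f : A -> B) {x y : A} (p : x == y) : f x == f y :=
  match p with idpath => idpath end.
Definition transport {A} (P : A -> Type) {x y : A} (p : x == y) (u : P x) : P y :=
  match p with idpath => u end.

Record Contr (A : Type) := { center : A ; contr : forall y : A, center == y }.
Arguments center {A} _.
Arguments contr {A} _ _.
Definition IsHSet (A : Type) := forall (x y : A) (p q : x == y), p == q.

Definition fib {A B} (f : A -> B) (b : B) := {a : A & f a == b}.
Definition IsEquiv {A B} (f : A -> B) := forall b : B, Contr (fib f b).
Definition equiv_inv {A B} {f : A -> B} (H : IsEquiv f) (b : B) : A :=
  projT1 (center (H b)).

Definition happly {A} {B : A -> Type} (f g : forall a, B a) (p : f == g) :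
  forall a, f a == g a := fun a => match p with idpath => idpath end.
Arguments happly {A B} f g p a.
Definition Funext := forall A (B : A -> Type) (f g : forall a, B a), IsEquiv (happly f g).

Record Cocone {A B C : Type} (f : C -> A) (g : C -> B) (Z : Type) := {
  cc_l : A -> Z ; cc_r : B -> Z ; cc_h : forall c, cc_l (f c) == cc_r (g c) }.
Arguments cc_l {A B C f g Z} _ _.
Arguments cc_r {A B C f g Z} _ _.
Arguments cc_h {A B C f g Z} _ _.

Definition cocone_post {A B C P : Type} {f : C -> A} {g : C -> B}
  (cc : Cocone f g P) (Z : Type) (h : P -> Z) : Cocone f g Z :=
  {| cc_l := fun a => h (cc_l cc a) ; cc_r := fun b => h (cc_r cc b) ;
     cc_h := fun c => ap h (cc_h cc c) |}.
Arguments cocone_post {A B C P f g} cc Z h.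

Record Pushout {A B C : Type} (f : C -> A) (g : C -> B) := {
  po_carrier : Type ;
  po_cocone : Cocone f g po_carrier ;
  po_up : forall Z : Type, IsEquiv (cocone_post po_cocone Z) }.
Arguments po_carrier {A B C f g} _.
Arguments po_cocone {A B C f g} _.
Arguments po_up {A B C f g} _ _ _.

Definition po_rec {A B C} {f : C -> A} {g : C -> B} (P : Pushout f g) (Z : Type)
  (cc : Cocone f g Z) : po_carrier P -> Z := equiv_inv (po_up P Z) cc.
Arguments po_rec {A B C f g} P Z cc _.

Definition Join (P X : Type) := Pushout (@fst P X) (@snd P X).
Definition HasJoins := forall P X : Type, Join P X.

Record BDLattice := {
  lcar : Type ;
  lset : IsHSet lcar ;
  lmeet : lcar -> lcar -> lcar ;
  ljoin : lcar -> lcar -> lcar ;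
  lbot : lcar ;
  ltop : lcar ;
  meet_assoc : forall a b c, lmeet a (lmeet b c) == lmeet (lmeet a b) c ;
  join_assoc : forall a b c, ljoin a (ljoin b c) == ljoin (ljoin a b) c ;
  meet_comm : forall a b, lmeet a b == lmeet b a ;
  join_comm : forall a b, ljoin a b == ljoin b a ;
  meet_absorb : forall a b, lmeet a (ljoin a b) == a ;
  join_absorb : forall a b, ljoin a (lmeet a b) == a ;
  meet_distr : forall a b c, lmeet a (ljoin b c) == ljoin (lmeet a b) (lmeet a c) ;
  join_bot : forall a, ljoin a lbot == a ;
  meet_top : forall a, lmeet a ltop == a }.

Section Constructions.
Variable Lat : BDLattice.
Variable J : HasJoins.
Local Notation I := (lcar Lat).
Local Notation i0 := (lbot Lat).
Local Notation i1 := (ltop Lat).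

Definition SCone (X : Type) := {i : I & po_carrier (J (i == i0) X)}.

Definition Lift (X : Type) := {i : I & (i == i1) -> X}.

Definition Connected01 (X : Type) := Contr ((i0 == i1) -> X).

Definition sigma_l {X : Type} (H : Connected01 X) {i : I} (p : i == i0) :
  (i == i1) -> X :=
  transport (fun k => (k == i1) -> X) (inverse p) (center H).

Definition sigma_glue {X : Type} (H : Connected01 X) {i : I} (p : i == i0) (x : X) :
  sigma_l H p == (fun _ => x).
Proof.
  unfold sigma_l.
  generalize (inverse p); clear p.
  intro q; destruct q. exact (contr H (fun _ => x)).
Defined.

Definition sigma_cocone {X : Type} (H : Connected01 X) (i : I) :
  Cocone (@fst (i == i0) X) (@snd (i == i0) X) ((i == i1) -> X) :=
  {| cc_l := sigma_l H ; cc_r := fun x _ => x ;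
     cc_h := fun pq => sigma_glue H (fst pq) (snd pq) |}.

Definition sigma {X : Type} (H : Connected01 X) : SCone X -> Lift X :=
  fun w => existT _ (projT1 w)
             (po_rec (J (projT1 w == i0) X) _ (sigma_cocone H (projT1 w)) (projT2 w)).

Definition top_of_01 (p : i0 == i1) (i : I) : i == i1.
Proof.
  refine (concat (inverse (join_bot Lat i)) _).
  refine (concat (ap (ljoin Lat i) p) _).
  refine (concat (join_comm Lat i i1) _).
  refine (concat (inverse (ap (ljoin Lat i1) (concat (meet_comm Lat i1 i) (meet_top Lat i)))) _).
  exact (join_absorb Lat i1 i).
Defined.

Definition conn_top (fe : Funext) (i : I) : Connected01 (i == i1).
Proof.
  refine {| center := fun p => top_of_01 p i |}.
  intro f.
  exact (equiv_inv (fe _ _ _ _) (fun p => lset Lat _ _ _ _)).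
Defined.

Definition Orthogonal (C : Type) {A B : Type} (m : A -> B) :=
  IsEquiv (fun (g : B -> C) (a : A) => g (m a)).

Definition LittleSierpinskiComplete (fe : Funext) (C : Type) :=
  forall i : I, Orthogonal C (sigma (conn_top fe i)).

Definition total_sigma (fe : Funext) (X : Type) :
  {u : Lift X & SCone (projT1 u == i1)} -> {u : Lift X & Lift (projT1 u == i1)} :=
  fun w => existT _ (projT1 w) (sigma (conn_top fe (projT1 (projT1 w))) (projT2 w)).

End Constructions.


(* A map out of a Σ-type is a family of maps out of its fibres, so precomposition
   with a fibrewise map [Σ_b P b -> Σ_b Q b] is, fibre by fibre, precomposition
   with the maps [P b -> Q b].  For [total_sigma] these are the comparison maps
   [σ_(πu=1)], each inverted by little-Sierpiński completeness; function
   extensionality glues the fibrewise inverses into a two-sided inverse, which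
   is then promoted to contractible fibres by the usual adjointification. *)

Lemma concat_1p {A} {x y : A} (p : x == y) : concat idpath p == p.
Proof. destruct p; exact idpath. Defined.

Lemma concat_p_pp {A} {x y z w : A} (p : x == y) (q : y == z) (r : z == w) :
  concat p (concat q r) == concat (concat p q) r.
Proof. destruct r, q; exact idpath. Defined.

Lemma concat_Vp {A} {x y : A} (p : x == y) : concat (inverse p) p == idpath.
Proof. destruct p; exact idpath. Defined.

Lemma ap_compose {A B C} (f : A -> B) (g : B -> C) {x y : A} (p : x == y) :
  ap (fun a => g (f a)) p == ap g (ap f p).
Proof. destruct p; exact idpath. Defined.

Lemma ap_idmap {A} {x y : A} (p : x == y) : ap (fun a => a) p == p.
Proof. destruct p; exact idpath. Defined.

Lemma whiskerL {A} {x y z : A} (p : x == y) {q q' : y == z} (e : q == q') :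
  concat p q == concat p q'.
Proof. destruct e; exact idpath. Defined.

Lemma whiskerR {A} {x y z : A} {p p' : x == y} (e : p == p') (q : y == z) :
  concat p q == concat p' q.
Proof. destruct e; exact idpath. Defined.

Lemma concat_Ap {A B} {f g : A -> B} (H : forall a, f a == g a) {x y : A} (p : x == y) :
  concat (H x) (ap g p) == concat (ap f p) (H y).
Proof. destruct p; exact (inverse (concat_1p _)). Defined.

Lemma cancelR {A} {x y z : A} (p q : x == y) (r : y == z) :
  concat p r == concat q r -> p == q.
Proof. destruct r; exact (fun e => e). Defined.

Lemma ap_homotopic_id {A} (f : A -> A) (H : forall a, f a == a) (a : A) :
  H (f a) == ap f (H a).
Proof.
  apply (cancelR _ _ (H a)).
  refine (concat (whiskerL (H (f a)) (inverse (ap_idmap (H a)))) _).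
  exact (concat_Ap H (H a)).
Defined.

Lemma transport_paths_Fl {A B} (f : A -> B) (b : B) {x y : A} (q : x == y) (u : f x == b) :
  transport (fun a => f a == b) q u == concat (inverse (ap f q)) u.
Proof. destruct q; exact (inverse (concat_1p _)). Defined.

Lemma path_sigma {A} (P : A -> Type) {x y : A} (q : x == y) {u : P x} {v : P y}
  (e : transport P q u == v) : existT P x u == existT P y v.
Proof. destruct q, e; exact idpath. Defined.

Section Adjointify.
Variables (A B : Type) (f : A -> B) (g : B -> A).
Hypotheses (s : forall b, f (g b) == b) (r : forall a, g (f a) == a).

(* The section [s] corrected so that it satisfies the triangle identity with [r]. *)
Definition adjointify_sect (b : B) : f (g b) == b :=
  concat (inverse (s (f (g b)))) (concat (ap f (r (g b))) (s b)).

Lemma adjointify_triangle (a : A) : ap f (r a) == adjointify_sect (f a).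
Proof.
  assert (square : concat (s (f (g (f a)))) (ap f (r a)) ==
                   concat (ap f (r (g (f a)))) (s (f a))).
  { refine (concat _ (whiskerR (ap (ap f) (inverse (ap_homotopic_id _ r a))) _)).
    refine (concat _ (whiskerR (ap_compose (fun a => g (f a)) f (r a)) _)).
    refine (concat _ (whiskerR (inverse (ap_compose f (fun b => f (g b)) (r a))) _)).
    refine (concat (whiskerL _ (inverse (ap_idmap _))) _).
    exact (concat_Ap s (ap f (r a))). }
  refine (concat _ (whiskerL _ square)).
  refine (concat _ (inverse (concat_p_pp _ _ _))).
  refine (concat _ (whiskerR (inverse (concat_Vp _)) _)).
  exact (inverse (concat_1p _)).
Defined.

Lemma isequiv_adjointify : IsEquiv f.
Proof.
  intro b; refine {| center := existT _ (g b) (adjointify_sect b) |}.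
  intros [a p]; destruct p.
  apply (path_sigma (fun x => f x == f a) (r a)).
  refine (concat (transport_paths_Fl f (f a) (r a) _) _).
  refine (concat (whiskerL _ (inverse (adjointify_triangle a))) _).
  exact (concat_Vp _).
Defined.

End Adjointify.

Arguments isequiv_adjointify {A B} f g s r _.

Lemma eisretr {A B} {f : A -> B} (H : IsEquiv f) (b : B) : f (equiv_inv H b) == b.
Proof. exact (projT2 (center (H b))). Defined.

Lemma eissect {A B} {f : A -> B} (H : IsEquiv f) (a : A) : equiv_inv H (f a) == a.
Proof. exact (ap (@projT1 _ _) (contr (H (f a)) (existT _ a idpath))). Defined.

Definition path_forall (fe : Funext) {A} {B : A -> Type} (f g : forall a, B a)
  (h : forall a, f a == g a) : f == g :=
  equiv_inv (fe A B f g) h.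

Definition functor_sigma {A} {P Q : A -> Type} (f : forall a, P a -> Q a) :
  sigT P -> sigT Q :=
  fun w => existT Q (projT1 w) (f (projT1 w) (projT2 w)).

Lemma orthogonal_functor_sigma (fe : Funext) (C : Type) {A : Type} {P Q : A -> Type}
  (f : forall a, P a -> Q a) (Hf : forall a, Orthogonal C (f a)) :
  Orthogonal C (functor_sigma f).
Proof.
  apply (isequiv_adjointify _
    (fun k w => equiv_inv (Hf (projT1 w)) (fun p => k (existT P (projT1 w) p)) (projT2 w))).
  - intro k; apply (path_forall fe); intros [a p].
    exact (happly _ _ (eisretr (Hf a) (fun p => k (existT P a p))) p).
  - intro h; apply (path_forall fe); intros [a q].
    exact (happly _ _ (eissect (Hf a) (fun q => h (existT Q a q))) q).
Defined.

Theorem mainTheorem7 (fe : Funext) (Lat : BDLattice) (J : HasJoins)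
  (X C : Type) (HC : LittleSierpinskiComplete Lat J fe C) :
  Orthogonal C (total_sigma Lat J fe X).
Proof.
  exact (orthogonal_functor_sigma fe C
    (fun u : Lift Lat X => sigma Lat J (conn_top Lat fe (projT1 u)))
    (fun u => HC (projT1 u))).
Qed.
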